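(* If $G$ is a graph with maximum degree $\Delta(G)\ge 3$, then $\alpha_{\mathrm{od}}(G)\ge |G|/((\Delta(G))^2-1)$.
   Context: All graphs are finite and simple; $|G|$ is the number of vertices. An odd independent set in $G=(V,E)$ is an independent set $S\subseteq V$ such that for every $v\in V\setminus S$, either $N(v)\cap S=\varnothing$ or $|N(v)\cap S|$ is odd, where $N(v)$ is the open neighborhood of $v$. $\alpha_{\mathrm{od}}(G)$ is the maximum size of an odd independent set of $G$. *)

From mathcomp Require Import all_boot all_order all_algebra.
Set Implicit Arguments. Unset Strict Implicit. Unset Printing Implicit Defensive.

(* A finite simple graph: vertex type T : finType, adjacency e : rel T,
   required (in the theorem) to be symmetric and irreflexive. *)

Definition nbhd (T : finType) (e : rel T) (v : T) : {set T} := [set u | e v u].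

Definition deg (T : finType) (e : rel T) (v : T) : nat := #|nbhd e v|.

(* maximum degree Delta(G) (0 for the empty graph) *)
Definition maxdeg (T : finType) (e : rel T) : nat := \max_(v : T) deg e v.

Definition independent (T : finType) (e : rel T) (S : {set T}) : bool :=
  [forall u in S, forall v in S, ~~ e u v].

Definition odd_independent (T : finType) (e : rel T) (S : {set T}) : bool :=
  independent e S &&
  [forall v in ~: S, (#|nbhd e v :&: S| == 0) || odd #|nbhd e v :&: S|].

Definition alpha_od (T : finType) (e : rel T) : nat :=
  \max_(S : {set T} | odd_independent e S) #|S|.

From mathcomp Require Import all_boot all_order all_algebra zify.
Set Implicit Arguments. Unset Strict Implicit. Unset Printing Implicit Defensive.

(* Grow an odd independent set S greedily while keeping
   |N2(S)| <= (D^2 - 1)|S|, where N2(S) is the set of vertices at distance at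
   most 2 from S; once N2(S) is the whole graph, |S| >= |G| / (D^2 - 1).
   A nonempty odd independent set S0 at distance at least 3 from S may be added,
   since no vertex then sees both S and S0, as long as it enlarges N2(S) by at
   most D^2 - 1 per vertex. Such an S0 always exists: a vertex v adjacent to
   N2(S) shares two vertices of its ball with N2(S); a vertex whose ball has at
   most D^2 - 1 vertices is cheap; three neighbours of y whose closed
   neighbourhoods meet only in y form an odd independent set (y sees all three,
   any other vertex at most one) whose three balls share these four vertices.
   Otherwise counting forces D = 3 and balls of exactly 9 vertices of degree 3;
   then either two vertices at distance 3 can be added together, or a ball is a
   whole component, a cubic graph of odd order, which the handshake lemma
   forbids. *)

Section CardBigcup.
Variables I T : finType.
Implicit Types (X : {set I}) (F : I -> {set T}).

Lemma card_bigcup_le X F : #|\bigcup_(i in X) F i| <= \sum_(i in X) #|F i|.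
Proof.
apply: (big_ind2 (fun (A : {set T}) n => #|A| <= n)); first by rewrite cards0.
  by move=> A m B n hA hB; apply: leq_trans (leq_card_setU A B) (leq_add hA hB).
by [].
Qed.

Lemma card_bigcup_overlap X F i j :
  i \in X -> j \in X -> i != j -> ~~ [disjoint F i & F j] ->
  #|\bigcup_(k in X) F k| < #|F i| + #|\bigcup_(k in X :\ i) F k|.
Proof.
move=> iX jX nij; rewrite -setI_eq0 => /set0Pn[x /setIP[xi xj]].
rewrite (big_setD1 i iX) /= ltn_neqAle (leq_card_setU _ _).2.
rewrite (leq_of_leqif (leq_card_setU _ _)) andbT.
rewrite -setI_eq0; apply/set0Pn; exists x; rewrite inE xi; apply/bigcupP.
by exists j; rewrite // !inE eq_sym nij.
Qed.

Lemma card_bigcup_common X F (W : {set T}) :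
  {in X, forall i, W \subset F i} ->
  #|\bigcup_(i in X) F i| + #|X| * #|W| <= #|W| + \sum_(i in X) #|F i|.
Proof.
move=> WF.
have sub : \bigcup_(i in X) F i \subset W :|: \bigcup_(i in X) (F i :\: W).
  apply/subsetP => x /bigcupP[i iX xF]; rewrite inE; case: (boolP (x \in W)) => //= xW.
  by apply/bigcupP; exists i; rewrite // inE xW.
have -> : \sum_(i in X) #|F i| = \sum_(i in X) #|F i :\: W| + #|X| * #|W|.
  rewrite -sum_nat_const -big_split; apply: eq_bigr => i iX.
  by rewrite -(cardsID W (F i)) (setIidPr (WF i iX)) addnC.
rewrite addnA leq_add2r; apply: leq_trans (subset_leq_card sub) _.
by apply: leq_trans (leq_card_setU _ _) _; rewrite leq_add2l card_bigcup_le.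
Qed.

End CardBigcup.

Section Graph.
Variables (T : finType) (e : rel T).
Hypotheses (e_sym : symmetric e) (e_irr : irreflexive e).
Local Notation D := (maxdeg e).
Implicit Types (S P R X : {set T}) (u v w x y z : T).

Definition cnbhd (u : T) : {set T} := u |: nbhd e u.

Definition ball2 (y : T) : {set T} :=
  [set x | [|| x == y, e y x | [exists w, e y w && e w x]]].

Definition nbhd2 (S : {set T}) : {set T} := \bigcup_(s in S) ball2 s.

Lemma ball2P x y :
  reflect [\/ x = y, e y x | exists2 w, e y w & e w x] (x \in ball2 y).
Proof.
rewrite inE; apply: (iffP or3P) => -[].
- by move/eqP; constructor 1.
- by constructor 2.
- by case/existsP=> w /andP[eyw ewx]; constructor 3; exists w.
- by move=> ->; rewrite eqxx; constructor 1.
- by constructor 2.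
- by case=> w eyw ewx; constructor 3; apply/existsP; exists w; rewrite eyw.
Qed.

Lemma ball2_center y : y \in ball2 y.
Proof. by apply/ball2P; constructor 1. Qed.

Lemma subset_nbhd2 S : S \subset nbhd2 S.
Proof. by apply/subsetP => s sS; apply/bigcupP; exists s; rewrite ?ball2_center. Qed.

Lemma nbhd2_set1 y : nbhd2 [set y] = ball2 y.
Proof. exact: big_set1. Qed.

Lemma deg_le_maxdeg v : deg e v <= D.
Proof. exact: (leq_bigmax (F := deg e)). Qed.

Lemma card_cnbhdD1 y u : e y u -> #|cnbhd u :\ y| = deg e u.
Proof.
move=> eyu; have := cardsD1 y (cnbhd u).
by rewrite cardsU1 !inE e_irr e_sym eyu orbT => -[].
Qed.

Lemma ball2_subU_cnbhdD1 y :
  ball2 y \subset y |: \bigcup_(u in nbhd e y) (cnbhd u :\ y).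
Proof.
apply/subsetP => x xy; rewrite !inE; case: eqP => //= /eqP nxy; apply/bigcupP.
case/ball2P: xy => [/eqP|eyx|[w eyw ewx]]; first by rewrite (negbTE nxy).
  by exists x; rewrite !inE ?eyx ?nxy ?eqxx.
by exists w; rewrite !inE ?eyw ?ewx ?nxy ?orbT.
Qed.

Lemma sum_card_cnbhdD1 y X : X \subset nbhd e y ->
  \sum_(u in X) #|cnbhd u :\ y| <= #|X| * D.
Proof.
move=> /subsetP Xy; rewrite -sum_nat_const; apply: leq_sum => u /Xy.
by rewrite inE => /card_cnbhdD1 ->; apply: deg_le_maxdeg.
Qed.

Lemma card_ball2_bigcup y :
  #|ball2 y| <= #|\bigcup_(u in nbhd e y) (cnbhd u :\ y)|.+1.
Proof.
apply: leq_trans (subset_leq_card (ball2_subU_cnbhdD1 y)) _.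
by rewrite cardsU1 -add1n leq_add2r leq_b1.
Qed.

Lemma card_ball2 y : #|ball2 y| <= (D * D).+1.
Proof.
apply: leq_trans (card_ball2_bigcup y) _; rewrite ltnS.
apply: leq_trans (card_bigcup_le _ _) _.
by apply: leq_trans (sum_card_cnbhdD1 (subxx _)) _; rewrite leq_mul2r deg_le_maxdeg orbT.
Qed.

Lemma odd_independentP S :
  reflect ({in S &, forall u v, ~~ e u v} /\
           forall v, v \notin S ->
             (#|nbhd e v :&: S| == 0) || odd #|nbhd e v :&: S|)
          (odd_independent e S).
Proof.
apply: (iffP andP) => [[/forall_inP ind /forall_inP par]|[ind par]]; split.
- by move=> u v uS vS; move/forall_inP: (ind u uS); apply.
- by move=> v vS; apply: par; rewrite inE.
- by apply/forall_inP => u uS; apply/forall_inP => v vS; apply: ind.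
- by apply/forall_inP => v; rewrite inE; apply: par.
Qed.

Lemma eq0_or_odd_leq1 n : n <= 1 -> (n == 0) || odd n.
Proof. by case: n => [|[]]. Qed.

Lemma odd_independent_set0 : odd_independent e set0.
Proof. by apply/odd_independentP; split=> [u v|v _]; rewrite ?inE // setI0 cards0. Qed.

Lemma odd_independent_set1 y : odd_independent e [set y].
Proof.
apply/odd_independentP; split=> [u v /set1P-> /set1P->|v _]; first by rewrite e_irr.
by apply: eq0_or_odd_leq1; rewrite -(cards1 y) subset_leq_card ?subsetIr.
Qed.

Lemma odd_independent_setU S1 S2 :
  odd_independent e S1 -> odd_independent e S2 -> [disjoint S2 & nbhd2 S1] ->
  odd_independent e (S1 :|: S2).
Proof.
move=> /odd_independentP[ind1 par1] /odd_independentP[ind2 par2] far.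
have far_ball s t : s \in S1 -> t \in S2 -> t \notin ball2 s.
  by move=> sS tS; apply: contraFN (disjointFr far tS) => ts; apply/bigcupP; exists s.
have nadj s t : s \in S1 -> t \in S2 -> ~~ e s t.
  move=> sS tS; apply: contraNN (far_ball s t sS tS) => est.
  by apply/ball2P; constructor 2.
apply/odd_independentP; split.
  move=> u v; rewrite !inE => /orP[uS|uS] /orP[vS|vS].
  - exact: ind1.
  - exact: nadj.
  - by rewrite e_sym; apply: nadj.
  - exact: ind2.
move=> v; rewrite inE negb_or => /andP[vS1 vS2]; rewrite setIUr.
have [->|/set0Pn[s /setIP[vs sS]]] := eqVneq (nbhd e v :&: S1) set0.
  by rewrite set0U; apply: par2.
suff -> : nbhd e v :&: S2 = set0 by rewrite setU0; apply: par1.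
apply/setP => t; rewrite !inE; apply/negP => /andP[vt tS].
case/negP: (far_ball s t sS tS); apply/ball2P; constructor 3; exists v => //.
by rewrite e_sym; move: vs; rewrite inE.
Qed.

Definition spread y P :=
  [forall u in P, forall v in P, (u != v) ==> [disjoint cnbhd u :\ y & cnbhd v :\ y]].

Definition has_spread_triple y :=
  [exists P : {set T}, [&& P \subset nbhd e y, #|P| == 3 & spread y P]].

Lemma spreadP y P :
  reflect {in P &, forall u v, u != v -> [disjoint cnbhd u :\ y & cnbhd v :\ y]}
          (spread y P).
Proof.
apply: (iffP forall_inP) => [sp u v uP vP|sp u uP].
  by move/forall_inP: (sp u uP) => /(_ v vP) /implyP.
by apply/forall_inP => v vP; apply/implyP; apply: sp.
Qed.

Lemma odd_independent_spread y P :
  P \subset nbhd e y -> odd #|P| -> spread y P -> odd_independent e P.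
Proof.
move=> /subsetP Py oddP /spreadP sp.
have ny u : u \in P -> u != y.
  by move=> uP; apply: contraTneq (Py u uP) => ->; rewrite inE e_irr.
apply/odd_independentP; split=> [u v uP vP|w wP].
  apply/negP => euv; have [uv|nuv] := eqVneq u v; first by rewrite uv e_irr in euv.
  have := sp u v uP vP nuv; rewrite -setI_eq0 => /eqP/setP/(_ v).
  by rewrite !inE eqxx (ny v vP) euv orbT.
have [->|nwy] := eqVneq w y.
  by rewrite (setIidPr (introT subsetP Py)) oddP orbT.
apply: eq0_or_odd_leq1; rewrite leqNgt; apply/card_gt1P => -[a [b [aN bN nab]]].
move: aN bN; rewrite !inE => /andP[ewa aP] /andP[ewb bP].
have := sp a b aP bP nab; rewrite -setI_eq0 => /eqP/setP/(_ w).
by rewrite !inE nwy !(e_sym _ w) ewa ewb !orbT.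
Qed.

Lemma card_nbhd2_nbhd y P : P \subset nbhd e y ->
  #|nbhd2 P| + #|P| * #|P| <= #|P| * (D * D).+1 + 1.
Proof.
move=> /subsetP Py.
have yP : y \notin P by apply: contraFN (e_irr y) => /Py; rewrite inE.
have Wball : {in P, forall p, y |: P \subset ball2 p}.
  move=> p pP; have eyp : e y p by have := Py p pP; rewrite inE.
  apply/subsetP => x /setU1P[->|xP]; apply/ball2P.
    by constructor 2; rewrite e_sym.
  by constructor 3; exists y; [rewrite e_sym | have := Py x xP; rewrite inE].
have := card_bigcup_common Wball; rewrite cardsU1 yP.
have : \sum_(p in P) #|ball2 p| <= #|P| * (D * D).+1.
  by rewrite -sum_nat_const; apply: leq_sum => p _; apply: card_ball2.
rewrite -/(nbhd2 P); move: #|nbhd2 P| #|P| (\sum_(p in P) _) (D * D) => *; nia.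
Qed.

Lemma overlap_cnbhdD1 y (Z : {set T}) :
  Z \subset nbhd e y -> 2 < #|Z| -> ~~ has_spread_triple y ->
  exists a b, [/\ a \in Z, b \in Z, a != b &
                  ~~ [disjoint cnbhd a :\ y & cnbhd b :\ y]].
Proof.
move=> /subsetP Zy /card_geqP[s [us ss sZ]] nosp.
have sP : [set x in s] \subset nbhd e y by apply/subsetP => x; rewrite inE => /sZ /Zy.
have cP : #|[set x in s]| == 3 by rewrite cardsE (card_uniqP us) ss.
have : ~~ spread y [set x in s].
  by apply: contra nosp => sp; apply/existsP; exists [set x in s]; rewrite sP cP.
case/forall_inPn => a; rewrite inE => /sZ aZ /forall_inPn[b]; rewrite inE => /sZ bZ.
by rewrite negb_imply => /andP[nab ov]; exists a, b.
Qed.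

Lemma large_ball2_cubic y :
  3 <= D -> D * D - 1 < #|ball2 y| -> ~~ has_spread_triple y ->
  [/\ D = 3, deg e y = 3 & #|ball2 y| <= 9].
Proof.
(* The sets [cnbhd u :\ y], u in N(y), cover [ball2 y] apart from y. Without
   a spread triple two of them overlap, and if deg y >= 4 another overlap
   remains after removing one set; each overlap saves a vertex on the bound
   (deg y) D + 1. *)
move=> hD big nosp; rewrite /deg; set N := nbhd e y.
pose U X := #|\bigcup_(u in X) (cnbhd u :\ y)|.
have U_le X : X \subset N -> U X <= #|X| * D.
  by move=> XN; apply: leq_trans (card_bigcup_le _ _) (sum_card_cnbhdD1 XN).
have U_lt X a b : X \subset N -> a \in X -> b \in X -> a != b ->
    ~~ [disjoint cnbhd a :\ y & cnbhd b :\ y] -> U X < D + U (X :\ a).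
  move=> /subsetP XN aX bX nab ov.
  apply: leq_trans (card_bigcup_overlap aX bX nab ov) _; rewrite leq_add2r.
  by have := XN a aX; rewrite inE => /card_cnbhdD1 ->; apply: deg_le_maxdeg.
have hb : #|ball2 y| <= (U N).+1 := card_ball2_bigcup y.
have hN : #|N| <= D := deg_le_maxdeg y.
have hUN := U_le N (subxx N).
have [hN2|hN2] := leqP #|N| 2.
  have : #|N| * D <= 2 * D by rewrite leq_mul2r hN2 orbT.
  by move=> h; exfalso; nia.
have [a [b [aN bN nab ov]]] := overlap_cnbhdD1 (subxx N) hN2 nosp.
have hab := U_lt N a b (subxx N) aN bN nab ov.
have NaN : N :\ a \subset N := subsetDl _ _.
have cNa : #|N| = #|N :\ a|.+1 by rewrite (cardsD1 a) aN.
have hUa := U_le _ NaN.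
have [hNa2|hNa2] := leqP #|N :\ a| 2.
  have : #|N :\ a| * D <= 2 * D by rewrite leq_mul2r hNa2 orbT.
  move=> h; have D3 : D = 3 by nia.
  by rewrite D3 in h hab; split => //; lia.
have [a' [b' [aN' bN' nab' ov']]] := overlap_cnbhdD1 NaN hNa2 nosp.
have hab' := U_lt _ a' b' NaN aN' bN' nab' ov'.
have hUa' := U_le _ (subset_trans (subsetDl _ [set a']) NaN).
have cNa' : #|N :\ a| = #|N :\ a :\ a'|.+1 by rewrite (cardsD1 a') aN'.
have : #|N| * D <= D * D by rewrite leq_mul2r hN orbT.
rewrite cNa cNa' !mulSn => h; exfalso.
by clear -big hb hab hab' hUa' h; lia.
Qed.

Lemma even_sum_card_nbhdI R : ~~ odd (\sum_(z in R) #|nbhd e z :&: R|).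
Proof.
have deg_sum z : #|nbhd e z :&: R| = \sum_(w in R) e z w.
  rewrite -sum1_card big_mkcond [RHS]big_mkcond /=; apply: eq_bigr => w _.
  by rewrite !inE andbC; case: (w \in R); case: (e z w).
(* Orienting each edge by [enum_rank] counts it once in each direction. *)
pose lt z w := (e z w && (enum_rank z < enum_rank w)%N : nat).
have split_edge z w : (e z w : nat) = lt z w + lt w z.
  rewrite /lt e_sym; case: (boolP (e w z)) => //= ewz.
  case: ltngtP => // /val_inj /enum_rank_inj zw.
  by rewrite zw e_irr in ewz.
under eq_bigr do rewrite deg_sum; under eq_bigr do under eq_bigr do rewrite split_edge.
under eq_bigr do rewrite big_split /=.
by rewrite big_split /= [X in _ + X]exchange_big addnn odd_double.
Qed.

Lemma cubic_closed_even R :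
  {in R, forall z, nbhd e z \subset R} -> {in R, forall z, deg e z = 3} ->
  ~~ odd #|R|.
Proof.
move=> closedR cubR; have := even_sum_card_nbhdI R.
rewrite (eq_bigr (fun _ => 3)) ?sum_nat_const ?oddM ?andbT // => z zR.
by rewrite (setIidPl (closedR z zR)); apply: cubR.
Qed.

Lemma boundary_or_closed R :
  (exists x v, [/\ x \in R, v \notin R & e x v]) \/ {in R, forall z, nbhd e z \subset R}.
Proof.
case: (boolP [exists x in R, ~~ (nbhd e x \subset R)]) => [/exists_inP[x xR]|].
  by case/subsetPn => v; rewrite inE => exv vR; left; exists x, v.
by move/exists_inPn => closedR; right => z /closedR /negPn.
Qed.

Lemma card_nbhd2_boundary S x v : x \in nbhd2 S -> v \notin nbhd2 S -> e x v ->
  #|nbhd2 S :|: ball2 v| + 2 <= #|nbhd2 S| + #|ball2 v|.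
Proof.
move=> /bigcupP[s sS xs] vS exv.
have vs : v \notin ball2 s by apply: contraNN vS => vs; apply/bigcupP; exists s.
case/ball2P: xs => [xs|esx|[w esw ewx]].
- by case/negP: vs; apply/ball2P; constructor 2; rewrite -xs.
- by case/negP: vs; apply/ball2P; constructor 3; exists x.
rewrite -cardsUI leq_add2l; apply/card_gt1P; exists w, x; rewrite !in_setI.
split.
- apply/andP; split; last by apply/ball2P; constructor 3; exists x; rewrite e_sym.
  by apply/bigcupP; exists s => //; apply/ball2P; constructor 2.
- apply/andP; split; last by apply/ball2P; constructor 2; rewrite e_sym.
  by apply/bigcupP; exists s => //; apply/ball2P; constructor 3; exists w.
- by apply: contraFneq (e_irr w) => wx; rewrite {2}wx.
Qed.

Definition efficient S :=
  odd_independent e S && (#|nbhd2 S| <= (D * D - 1) * #|S|).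

Definition admissible S S0 :=
  [&& S0 != set0, odd_independent e S0, [disjoint S0 & nbhd2 S] &
      #|nbhd2 S :|: nbhd2 S0| <= #|nbhd2 S| + (D * D - 1) * #|S0|].

Lemma efficient_setU S S0 : efficient S -> admissible S S0 ->
  efficient (S :|: S0) /\ #|nbhd2 S| < #|nbhd2 (S :|: S0)|.
Proof.
move=> /andP[oddS costS] /and4P[/set0Pn[t tS0] oddS0 far cost0].
have eqN : nbhd2 (S :|: S0) = nbhd2 S :|: nbhd2 S0 by apply: bigcup_setU.
rewrite /efficient eqN; split; last first.
  apply: proper_card; apply/properP; split; first exact: subsetUl.
  exists t; last by rewrite (disjointFr far tS0).
  by rewrite inE (subsetP (subset_nbhd2 S0)) ?orbT.
have cardU : #|S :|: S0| = #|S| + #|S0|.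
  apply/eqP; rewrite (leq_card_setU S S0).2 disjoint_sym.
  exact: disjointWr (subset_nbhd2 S) far.
rewrite odd_independent_setU //= cardU mulnDr.
by apply: leq_trans cost0 _; rewrite leq_add2r.
Qed.

Lemma admissible_set1 S z : z \notin nbhd2 S ->
  #|nbhd2 S :|: ball2 z| <= #|nbhd2 S| + (D * D - 1) -> admissible S [set z].
Proof.
move=> zS cost; apply/and4P; split.
- by apply/set0Pn; exists z; rewrite inE.
- exact: odd_independent_set1.
- by rewrite disjoints1.
- by rewrite nbhd2_set1 cards1 muln1.
Qed.

Lemma admissible_boundary S x v : x \in nbhd2 S -> v \notin nbhd2 S -> e x v ->
  admissible S [set v].
Proof.
move=> xS vS exv; apply: admissible_set1 => //.
have := card_nbhd2_boundary xS vS exv; have := card_ball2 v; lia.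
Qed.

Lemma admissible_small_ball S z : z \notin nbhd2 S -> #|ball2 z| <= D * D - 1 ->
  admissible S [set z].
Proof.
move=> zS small; apply: admissible_set1 => //.
by apply: leq_trans (leq_card_setU _ _) _; rewrite leq_add2l.
Qed.

Lemma admissible_spread S y P : [disjoint nbhd e y & nbhd2 S] ->
  P \subset nbhd e y -> #|P| = 3 -> spread y P -> admissible S P.
Proof.
move=> far Py P3 sp; apply/and4P; split.
- by rewrite -card_gt0 P3.
- by apply: odd_independent_spread Py _ sp; rewrite P3.
- exact: disjointWl Py far.
- apply: leq_trans (leq_card_setU _ _) _; rewrite leq_add2l.
  by have := card_nbhd2_nbhd Py; rewrite P3; lia.
Qed.

Lemma admissible_far_pair S y v x : y \notin nbhd2 S -> v \notin nbhd2 S ->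
  x \in ball2 y -> v \notin ball2 y -> e x v ->
  #|ball2 y| <= D * D -> #|ball2 v| <= D * D -> admissible S [set y; v].
Proof.
move=> yS vS xy vy exv smally smallv.
have nby : nbhd2 [set y; v] = ball2 y :|: ball2 v.
  by rewrite /nbhd2 bigcup_setU !big_set1.
have nyv : y != v by apply: contraNneq vy => <-; apply: ball2_center.
apply/and4P; split.
- by apply/set0Pn; exists y; rewrite !inE eqxx.
- apply: odd_independent_setU; rewrite ?odd_independent_set1 //.
  by rewrite nbhd2_set1 disjoints1.
- by rewrite disjoints_subset subUset !sub1set !inE yS vS.
- rewrite cards2 nyv nby; apply: leq_trans (leq_card_setU _ _) _; rewrite leq_add2l.
  rewrite -nbhd2_set1 in xy vy *.
  have := card_nbhd2_boundary xy vy exv; rewrite nbhd2_set1; lia.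
Qed.

Lemma exists_admissible_cubic S y : D = 3 -> y \notin nbhd2 S ->
  (forall z w, z \notin nbhd2 S -> e z w -> w \notin nbhd2 S) ->
  (forall z, z \notin nbhd2 S -> deg e z = 3 /\ #|ball2 z| = 9) ->
  exists S0, admissible S S0.
Proof.
move=> D3 yS out cubic.
have ball_out x : x \in ball2 y -> x \notin nbhd2 S.
  by case/ball2P => [->|/(out _ _ yS)|[w /(out _ _ yS) wS /(out _ _ wS)]].
have [[x [v [xy vy exv]]]|closedy] := boundary_or_closed (ball2 y).
  have vS := out _ _ (ball_out x xy) exv.
  exists [set y; v]; apply: (admissible_far_pair yS vS xy vy exv).
    by rewrite D3 (cubic y yS).2.
  by rewrite D3 (cubic v vS).2.
have cubic_y : {in ball2 y, forall z, deg e z = 3}.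
  by move=> z /ball_out /cubic[].
by have := cubic_closed_even closedy cubic_y; rewrite (cubic y yS).2.
Qed.

Lemma exists_admissible S y : 3 <= D -> y \notin nbhd2 S ->
  exists S0, admissible S S0.
Proof.
move=> hD yS.
have [[x [v [xS vS exv]]]|closedS] := boundary_or_closed (nbhd2 S).
  by exists [set v]; apply: admissible_boundary exv.
have out z w : z \notin nbhd2 S -> e z w -> w \notin nbhd2 S.
  move=> zS ezw; apply: contraNN zS => wS.
  by apply: (subsetP (closedS w wS)); rewrite inE e_sym.
have [small|/existsPn big] :=
  boolP [exists z, (z \notin nbhd2 S) && (#|ball2 z| <= D * D - 1)].
  case/existsP: small => z /andP[zS hz].
  by exists [set z]; apply: admissible_small_ball.
have [spr|/existsPn nospr] :=
  boolP [exists z, (z \notin nbhd2 S) && has_spread_triple z].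
  case/existsP: spr => z /andP[zS /existsP[P /and3P[Pz /eqP P3 sp]]].
  exists P; apply: admissible_spread Pz P3 sp.
  by rewrite disjoints_subset; apply/subsetP => w; rewrite !inE => /(out _ _ zS).
have cubic z : z \notin nbhd2 S -> [/\ D = 3, deg e z = 3 & #|ball2 z| <= 9].
  move=> zS; apply: large_ball2_cubic => //.
    by move: (big z); rewrite zS ltnNge.
  by move: (nospr z); rewrite zS.
have [D3 _ _] := cubic y yS.
apply: (exists_admissible_cubic D3 yS out) => z zS.
have [_ deg3 small] := cubic z zS; split => //.
by apply/eqP; rewrite eqn_leq small; move: (big z); rewrite zS D3 ltnNge.
Qed.

Lemma efficient_cover : 3 <= D -> exists2 S, efficient S & nbhd2 S = [set: T].
Proof.
move=> hD.
have eff0 : efficient set0.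
  by rewrite /efficient odd_independent_set0 /nbhd2 big_set0 cards0.
have [S effS maxS] := arg_maxnP (fun S => #|nbhd2 S|) eff0.
exists S => //; apply/setP => y; rewrite inE; apply: contraT => yS.
have [S0 adm] := exists_admissible hD yS.
have [effU ltU] := efficient_setU effS adm.
by move: (maxS _ effU); rewrite /= leqNgt ltU.
Qed.

End Graph.

Import Order.TTheory GRing.Theory Num.Theory.
Local Open Scope ring_scope.

Theorem theorem5 (T : finType) (e : rel T)
  (e_sym : symmetric e) (e_irr : irreflexive e)
  (hD : (3 <= maxdeg e)%N) :
  (#|T|%:R / ((maxdeg e)%:R ^+ 2 - 1) <= (alpha_od e)%:R :> rat).
Proof.
have [S /andP[oddS costS] coverS] := efficient_cover e_sym e_irr hD.
have alphaS : (#|S| <= alpha_od e)%N := leq_bigmax_cond _ oddS.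
have D2 : (1 <= maxdeg e * maxdeg e)%N.
  by rewrite muln_gt0 andbb; apply: leq_trans hD.
have -> : (maxdeg e)%:R ^+ 2 - 1 = (maxdeg e * maxdeg e - 1)%:R :> rat.
  by rewrite natrB // natrM expr2.
rewrite ler_pdivrMr ?ltr0n ?subn_gt0 -?natrM ?ler_nat; last first.
  by apply: (@leq_trans 9) => //; apply: (@leq_mul 3 3).
rewrite -cardsT -coverS mulnC; apply: leq_trans costS _.
by rewrite leq_mul2l alphaS orbT.
Qed.
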